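(* Let $G$ be a group with a limiting sequence pair $(F_n)_n$, $(k_n)_n$, and let $(g_n)_{n\in\mathbb{N}}$ be any sequence of elements of $G$. Then there exists a sequence $(m_n)_{n\in\mathbb{N}}$ of natural numbers such that for every $l\in\mathbb{N}$ and every $x\in G$, $$g_1\big(g_2(\cdots g_{l-1}(g_lx^{m_l})^{m_{l-1}}\cdots)^{m_2}\big)^{m_1}\in F_l$$ implies $x=1_G$.
   Context: $\mathbb{N}=\{1,2,3,\dots\}$. For a subset $S$ of a group $G$ and $j\in\mathbb{N}$, let $\sqrt[j]{S}=\{g\in G\mid g^j\in S\}$. A limiting sequence pair for $G$ is a pair consisting of subsets $F_1\subseteq F_2\subseteq\cdots$ of $G$ and natural numbers $k_1,k_2,\dots$ such that for every $n\in\mathbb{N}$: (1) for every $g\in G$ there is $m\in\mathbb{N}$ with $gF_n\subseteq F_m$; (2) $\sqrt[k_n]{F_n}=\{1_G\}$; (3) $\sqrt[k_m]{F_n}\subseteq F_n$ for all $m\le n$. *)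

From Stdlib Require Import Arith.

Definition is_group {G : Type} (mul : G -> G -> G) (one : G) (inv : G -> G) : Prop :=
  (forall x y z, mul x (mul y z) = mul (mul x y) z) /\
  (forall x, mul one x = x) /\ (forall x, mul x one = x) /\
  (forall x, mul (inv x) x = one) /\ (forall x, mul x (inv x) = one).

Fixpoint gpow {G : Type} (mul : G -> G -> G) (one : G) (x : G) (j : nat) : G :=
  match j with
  | 0 => one
  | S j' => mul x (gpow mul one x j')
  end.

Definition groot {G : Type} (mul : G -> G -> G) (one : G) (j : nat) (S : G -> Prop) : G -> Prop :=
  fun g => S (gpow mul one g j).

(* Limiting sequence pair; sequences are indexed by nat, only indices n >= 1
   are meaningful (N = {1,2,...}); values at index 0 are ignored. *)
Definition limiting_sequence_pair {G : Type} (mul : G -> G -> G) (one : G)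
  (F : nat -> G -> Prop) (k : nat -> nat) : Prop :=
  (forall n, 1 <= n -> forall y, F n y -> F (S n) y) /\
  (forall n, 1 <= n -> 1 <= k n) /\
  (forall n, 1 <= n -> forall g, exists m, 1 <= m /\
       forall y, F n y -> F m (mul g y)) /\                      (* (1) g F_n ⊆ F_m *)
  (forall n, 1 <= n -> forall g, groot mul one (k n) (F n) g <-> g = one) /\ (* (2) *)
  (forall m n, 1 <= m -> m <= n -> forall g,
       groot mul one (k m) (F n) g -> F n g).                    (* (3) *)

(* nest g m l x = g_1 (g_2 ( ... g_{l-1} (g_l x^{m_l})^{m_{l-1}} ... )^{m_2})^{m_1} *)
Fixpoint nest {G : Type} (mul : G -> G -> G) (one : G) (g : nat -> G) (m : nat -> nat)
  (l : nat) (y : G) : G :=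
  match l with
  | 0 => y
  | S l' => nest mul one g m l' (mul (g (S l')) (gpow mul one y (m (S l'))))
  end.

(* Peel the nested word from the outside in.  If [g_i w] lies in [F_a], then [w] lies in
   [F_b] for an index [b] obtained from axiom (1) applied to [g_i^-1]; taking running
   maxima makes these indices monotone in [a], so the level reached after [i] such steps
   from any start [l >= i] is at least the level [d_i] reached from [i] itself.  Choosing
   [m_i = k_1 ... k_(d_i)], axiom (3) strips a power [y^(m_i)] off an element of [F_c]
   whenever [d_i <= c]; at the innermost step the last factor [k_(d_l)] is removed by
   axiom (2) instead, which forces [x = 1]. *)
From Stdlib Require Import Lia ClassicalEpsilon.

Section MonoidPowers.
Context {G : Type} {mul : G -> G -> G} {one : G}.
Hypothesis mulA : forall x y z, mul x (mul y z) = mul (mul x y) z.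
Hypothesis mul1g : forall x, mul one x = x.

Local Notation "x ^+ n" := (gpow mul one x n) (at level 29, left associativity).

Lemma gpowD x a b : x ^+ (a + b) = mul (x ^+ a) (x ^+ b).
Proof.
  induction a as [|a IHa]; simpl.
  - now rewrite mul1g.
  - now rewrite IHa, mulA.
Qed.

Lemma gpowM x a b : x ^+ (a * b) = x ^+ b ^+ a.
Proof.
  induction a as [|a IHa]; simpl; [reflexivity|].
  now rewrite gpowD, IHa.
Qed.

End MonoidPowers.

Fixpoint kprod (k : nat -> nat) (j : nat) : nat :=
  match j with 0 => 1 | S i => kprod k i * k (S i) end.

Lemma kprod_pos (k : nat -> nat) j : (forall n, 1 <= n -> 1 <= k n) -> 1 <= kprod k j.
Proof.
  intros k_pos; induction j as [|j IHj]; simpl; [lia|].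
  specialize (k_pos (S j)); nia.
Qed.

Fixpoint prefix_max (f : nat -> nat) (a : nat) : nat :=
  match a with 0 => f 0 | S b => Nat.max (prefix_max f b) (f (S b)) end.

Lemma le_prefix_max f a : f a <= prefix_max f a.
Proof. destruct a; simpl; lia. Qed.

Lemma prefix_max_mono f a b : a <= b -> prefix_max f a <= prefix_max f b.
Proof. induction 1; simpl; lia. Qed.

Fixpoint iter_steps (step : nat -> nat -> nat) (a i : nat) : nat :=
  match i with 0 => a | S j => step (S j) (iter_steps step a j) end.

Section IteratedSteps.
Variable step : nat -> nat -> nat.
Hypothesis step_mono : forall i a b, a <= b -> step i a <= step i b.
Hypothesis step_ge : forall i a, a <= step i a.

Lemma iter_steps_mono i a b : a <= b -> iter_steps step a i <= iter_steps step b i.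
Proof. induction i; simpl; auto. Qed.

Lemma iter_steps_ge i a : a <= iter_steps step a i.
Proof. induction i; simpl; [lia|]. specialize (step_ge (S i) (iter_steps step a i)); lia. Qed.

End IteratedSteps.

Section LimitingSequence.
Context {G : Type} {mul : G -> G -> G} {one : G}.
Hypothesis mulA : forall x y z, mul x (mul y z) = mul (mul x y) z.
Hypothesis mul1g : forall x, mul one x = x.
Hypothesis mulg1 : forall x, mul x one = x.

Local Notation "x ^+ n" := (gpow mul one x n) (at level 29, left associativity).

Variables (F : nat -> G -> Prop) (k : nat -> nat).
Hypothesis F_succ : forall n, 1 <= n -> forall y, F n y -> F (S n) y.
Hypothesis root_trivial : forall n, 1 <= n -> forall x, groot mul one (k n) (F n) x -> x = one.
Hypothesis root_closed :
  forall m n, 1 <= m -> m <= n -> forall x, groot mul one (k m) (F n) x -> F n x.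

Lemma F_mono n n' y : 1 <= n -> n <= n' -> F n y -> F n' y.
Proof.
  intros n_pos le_nn' Fy; induction le_nn'; [assumption|].
  apply F_succ; [lia|assumption].
Qed.

Lemma mem_kprod_root n j x : j <= n -> F n (x ^+ kprod k j) -> F n x.
Proof.
  revert x; induction j as [|j IHj]; intros x le_jn Fx; simpl in Fx.
  - now rewrite mulg1 in Fx.
  - rewrite gpowM in Fx by assumption.
    apply (root_closed (S j) n); [lia|lia|].
    apply IHj; [lia|assumption].
Qed.

Lemma kprod_root_trivial n x : 1 <= n -> F n (x ^+ kprod k n) -> x = one.
Proof.
  destruct n as [|j]; [lia|]; intros n_pos Fx; simpl in Fx.
  rewrite gpowM in Fx by assumption.
  apply (root_trivial (S j)); [lia|].
  apply (mem_kprod_root (S j) j); [lia|assumption].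
Qed.

Section Descent.
Variables (g : nat -> G) (shift : nat -> nat -> nat).
Hypothesis shift_spec : forall i a, 1 <= a ->
  1 <= shift i a /\ forall w, F a (mul (g i) w) -> F (shift i a) w.

Definition shift_step (i : nat) : nat -> nat := prefix_max (fun b => Nat.max b (shift i b)).
Definition level (a i : nat) : nat := iter_steps shift_step a i.
Definition exponent (i : nat) : nat := kprod k (level i i).

Lemma shift_step_mono i a b : a <= b -> shift_step i a <= shift_step i b.
Proof. apply prefix_max_mono. Qed.

Lemma shift_step_ge i a : a <= shift_step i a /\ shift i a <= shift_step i a.
Proof.
  pose proof (le_prefix_max (fun b => Nat.max b (shift i b)) a) as le_max.
  cbv beta in le_max; unfold shift_step; lia.
Qed.

Lemma mem_shift_step i a w : 1 <= a -> F a (mul (g i) w) -> F (shift_step i a) w.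
Proof.
  intros a_pos Fw.
  destruct (shift_spec i a a_pos) as [shift_pos mem_shift].
  apply F_mono with (shift i a); [assumption | apply shift_step_ge | now apply mem_shift].
Qed.

Lemma level_mono i a b : a <= b -> level a i <= level b i.
Proof. apply iter_steps_mono, shift_step_mono. Qed.

Lemma level_ge i a : a <= level a i.
Proof. apply iter_steps_ge; intros; apply shift_step_ge. Qed.

Lemma mem_level_nest i a y :
  1 <= a -> i <= a -> F a (nest mul one g exponent i y) -> F (level a i) y.
Proof.
  revert y; induction i as [|i IHi]; intros y a_pos le_ia Fy; simpl in Fy; [exact Fy|].
  apply IHi in Fy; [|assumption|lia].
  apply mem_shift_step in Fy; [|pose proof (level_ge i a); lia].
  apply (mem_kprod_root _ (level (S i) (S i))); [apply level_mono; lia | exact Fy].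
Qed.

Lemma mem_nest_trivial l x : 1 <= l -> F l (nest mul one g exponent l x) -> x = one.
Proof.
  destruct l as [|l]; [lia|]; intros l_pos Fx; simpl in Fx.
  apply mem_level_nest in Fx; [|lia|lia].
  apply mem_shift_step in Fx; [|pose proof (level_ge l (S l)); lia].
  apply (kprod_root_trivial (level (S l) (S l))); [|exact Fx].
  pose proof (level_ge (S l) (S l)); lia.
Qed.

End Descent.

End LimitingSequence.

Lemma exists_shift {G : Type} (mul : G -> G -> G) (one : G) (inv : G -> G)
  (HG : is_group mul one inv) (F : nat -> G -> Prop)
  (translate : forall n, 1 <= n -> forall h, exists m, 1 <= m /\
       forall y, F n y -> F m (mul h y))
  (g : nat -> G) :
  exists shift : nat -> nat -> nat,
    forall i a, 1 <= a -> 1 <= shift i a /\ forall w, F a (mul (g i) w) -> F (shift i a) w.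
Proof.
  destruct HG as (mulA & mul1g & _ & mulVg & _).
  assert (pointwise : forall ia : nat * nat, exists b, 1 <= snd ia ->
    1 <= b /\ forall w, F (snd ia) (mul (g (fst ia)) w) -> F b w).
  { intros [i a]; simpl.
    destruct (Compare_dec.le_gt_dec 1 a) as [a_pos | a_lt1]; [|exists 0; lia].
    destruct (translate a a_pos (inv (g i))) as (b & b_pos & Fb).
    exists b; split; [assumption|]; intros w Fw.
    specialize (Fb _ Fw). now rewrite mulA, mulVg, mul1g in Fb. }
  destruct (choice _ pointwise) as (shift & shift_spec).
  exists (fun i a => shift (i, a)); intros i a; exact (shift_spec (i, a)).
Qed.

Theorem lemma2p2 (G : Type) (mul : G -> G -> G) (one : G) (inv : G -> G)
  (HG : is_group mul one inv)
  (F : nat -> G -> Prop) (k : nat -> nat)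
  (HF : limiting_sequence_pair mul one F k)
  (g : nat -> G) :
  exists m : nat -> nat, (forall n, 1 <= n -> 1 <= m n) /\
    forall (l : nat) (x : G), 1 <= l ->
      F l (nest mul one g m l x) -> x = one.
Proof.
  destruct HF as (F_succ & k_pos & translate & root_trivial & root_closed).
  destruct (exists_shift mul one inv HG F translate g) as (shift & shift_spec).
  destruct HG as (mulA & mul1g & mulg1 & _).
  exists (exponent k shift); split.
  - intros n _; apply kprod_pos, k_pos.
  - exact (mem_nest_trivial mulA mul1g mulg1 F k F_succ
             (fun n n_pos x => proj1 (root_trivial n n_pos x)) root_closed g shift shift_spec).
Qed.
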